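(* Let $\mathbb{S}\subseteq\mathbb{R}$ be an interval and let $Q:\mathbb{S}\to\mathbb{R}$ be twice differentiable, with $q=Q'$, $f(z)=e^{Q(z)}$, $p(z)=1/(1+e^{-Q(z)})$ and $H(z)=\log(1+e^{Q(z)})$. If the matching loss $$\mathcal{L}_m(\hat s,s)=\log\big(1+e^{Q(\hat s)}\big)-\log\big(1+e^{Q(s)}\big)-(\hat s-s)\,q(s)\,p(s)$$ is convex in $\hat s$ over $\mathbb{S}$ (for all $s\in\mathbb{S}$), then $f'$ is non-decreasing on $\mathbb{S}$.
   Context: This is the case of regularization strength $\gamma=1$ of the composite Softplus primitive; $f$ is the score-transform function. *)

From Stdlib Require Import Reals.
From Coquelicot Require Import Coquelicot.
Open Scope R_scope.

Definition is_interval (S : R -> Prop) : Prop :=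
  forall x y z, S x -> S z -> x <= y -> y <= z -> S y.

(* l is the derivative of f at x relative to S (one-sided at endpoints):
   the difference quotient tends to l as y -> x with y in S, y <> x. *)
Definition derive_within (S : R -> Prop) (f : R -> R) (x l : R) : Prop :=
  filterlim (fun y => (f y - f x) / (y - x))
            (within (fun y => S y /\ y <> x) (locally x)) (locally l).

Definition convex_on (S : R -> Prop) (g : R -> R) : Prop :=
  forall x y t, S x -> S y -> 0 <= t <= 1 ->
    g (t * x + (1 - t) * y) <= t * g x + (1 - t) * g y.

Definition nondecreasing_on (S : R -> Prop) (g : R -> R) : Prop :=
  forall x y, S x -> S y -> x <= y -> g x <= g y.

(* Score transform and link functions of the composite Softplus primitive (gamma = 1) *)
Definition f_of (Q : R -> R) (z : R) : R := exp (Q z).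
Definition p_of (Q : R -> R) (z : R) : R := 1 / (1 + exp (- Q z)).

Definition matching_loss (Q q : R -> R) (shat s : R) : R :=
  ln (1 + exp (Q shat)) - ln (1 + exp (Q s)) - (shat - s) * q s * p_of Q s.

(* The matching loss differs from H = log (1 + exp o Q) by a function affine in the
   first argument, so H is convex on S; hence so is f = exp o H - 1, exp being convex
   and increasing.  By the three-chord inequality the slopes of a convex function are
   monotone, and passing to the limit (one-sided at the ends of S) shows that its
   derivative is non-decreasing. *)

From Stdlib Require Import Reals Lra.
From Coquelicot Require Import Coquelicot.
Open Scope R_scope.

Definition slope (F : R -> R) (x y : R) : R := (F y - F x) / (y - x).

Lemma slope_sym F x y : slope F x y = slope F y x.
Proof.
  unfold slope. destruct (Req_dec x y) as [-> | Hxy]; [reflexivity | field; lra].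
Qed.

Lemma Rdiv_le_cross a b c d : 0 < b -> 0 < d -> a * d <= c * b -> a / b <= c / d.
Proof.
  intros Hb Hd H. apply Rle_div_l; [lra|].
  replace (c / d * b) with (c * b / d) by (field; lra).
  now apply Rle_div_r.
Qed.

Lemma convex_on_three_slopes S F a b c : convex_on S F -> S a -> S c -> a < b < c ->
  slope F a b <= slope F a c /\ slope F a c <= slope F b c.
Proof.
  intros HF Sa Sc [Hab Hbc].
  assert (Hkey : (c - a) * F b <= (c - b) * F a + (b - a) * F c).
  { set (t := (c - b) / (c - a)).
    assert (Ht : 0 <= t <= 1).
    { unfold t; split.
      - apply Rdiv_le_0_compat; lra.
      - apply Rle_div_l; lra. }
    pose proof (HF a c t Sa Sc Ht) as H.
    replace (t * a + (1 - t) * c) with b in H by (unfold t; field; lra).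
    replace (1 - t) with ((b - a) / (c - a)) in H by (unfold t; field; lra).
    unfold t in H. apply (Rmult_le_compat_l (c - a)) in H; [|lra].
    replace ((c - a) * ((c - b) / (c - a) * F a + (b - a) / (c - a) * F c))
      with ((c - b) * F a + (b - a) * F c) in H by (field; lra).
    exact H. }
  unfold slope; split; apply Rdiv_le_cross; nra.
Qed.

Lemma convex_on_slope_nondecreasing S F x z w : convex_on S F ->
  S x -> S z -> S w -> z <> x -> w <> x -> z <= w -> slope F x z <= slope F x w.
Proof.
  intros HF Sx Sz Sw Hzx Hwx Hzw.
  destruct (Req_dec z w) as [<- | Hne]; [lra|].
  destruct (Rlt_or_le x z) as [Hxz | Hzx'].
  - exact (proj1 (convex_on_three_slopes S F x z w HF Sx Sw ltac:(lra))).
  - destruct (Rlt_or_le x w) as [Hxw | Hwx'].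
    + destruct (convex_on_three_slopes S F z x w HF Sz Sw ltac:(lra)).
      rewrite slope_sym; lra.
    + destruct (convex_on_three_slopes S F z w x HF Sz Sx ltac:(lra)).
      rewrite (slope_sym F x z), (slope_sym F x w); lra.
Qed.

Lemma within_punctured_interval_proper S x y : is_interval S -> S x -> S y -> y <> x ->
  ProperFilter' (within (fun z => S z /\ z <> x) (locally x)).
Proof.
  intros HI Sx Sy Hyx. split; [| apply within_filter, locally_filter].
  intros [eps Heps]. pose proof (cond_pos eps) as Heps_pos.
  assert (Hyx_pos : 0 < Rabs (y - x)) by (apply Rabs_pos_lt; lra).
  set (r := Rmin (eps / 2) (Rabs (y - x) / 2)).
  assert (Hr : 0 < r) by (apply Rmin_pos; lra).
  pose proof (Rmin_l (eps / 2) (Rabs (y - x) / 2)) as Hr_eps; fold r in Hr_eps.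
  pose proof (Rmin_r (eps / 2) (Rabs (y - x) / 2)) as Hr_yx; fold r in Hr_yx.
  destruct (Rlt_or_le x y) as [Hxy | Hyx'].
  - rewrite Rabs_right in Hr_yx by lra.
    apply (Heps (x + r)); [| split; [apply (HI x _ y); auto; lra | lra]].
    change (Rabs (x + r - x) < eps). rewrite Rabs_right; lra.
  - rewrite Rabs_left1 in Hr_yx by lra.
    apply (Heps (x - r)); [| split; [apply (HI y _ x); auto; lra | lra]].
    change (Rabs (x - r - x) < eps). rewrite Rabs_left; lra.
Qed.

Section DeriveWithinSlopeBounds.

Variables (S : R -> Prop) (F : R -> R) (x l s eps : R).
Hypotheses (Hproper : ProperFilter' (within (fun z => S z /\ z <> x) (locally x)))
  (HF : derive_within S F x l) (Heps : 0 < eps).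

Lemma derive_within_le_slope_bound :
  (forall z, S z -> z <> x -> Rabs (z - x) < eps -> slope F x z <= s) -> l <= s.
Proof.
  intros Hs.
  apply (filterlim_le (F := within _ (locally x)) (slope F x) (fun _ => s) l s);
    [| exact HF | apply filterlim_const].
  exists (mkposreal eps Heps). intros z Hz [Sz Hzx]. exact (Hs z Sz Hzx Hz).
Qed.

Lemma derive_within_ge_slope_bound :
  (forall z, S z -> z <> x -> Rabs (z - x) < eps -> s <= slope F x z) -> s <= l.
Proof.
  intros Hs.
  apply (filterlim_le (F := within _ (locally x)) (fun _ => s) (slope F x) s l);
    [| apply filterlim_const | exact HF].
  exists (mkposreal eps Heps). intros z Hz [Sz Hzx]. exact (Hs z Sz Hzx Hz).
Qed.

End DeriveWithinSlopeBounds.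

Lemma convex_on_derive_within_nondecreasing S F dF : is_interval S -> convex_on S F ->
  (forall x, S x -> derive_within S F x (dF x)) -> nondecreasing_on S dF.
Proof.
  intros HI HF HD x y Sx Sy Hxy.
  destruct (Req_dec x y) as [<- | Hne]; [lra|].
  assert (Hleft : dF x <= slope F x y).
  { apply (derive_within_le_slope_bound S F x _ _ (y - x));
      [apply (within_punctured_interval_proper S x y); auto | auto | lra |].
    intros z Sz Hzx Hz. apply Rabs_lt_between' in Hz.
    apply (convex_on_slope_nondecreasing S); auto; lra. }
  assert (Hright : slope F y x <= dF y).
  { apply (derive_within_ge_slope_bound S F y _ _ (y - x));
      [apply (within_punctured_interval_proper S y x); auto | auto | lra |].
    intros z Sz Hzy Hz. apply Rabs_lt_between' in Hz.
    apply (convex_on_slope_nondecreasing S); auto; lra. }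
  rewrite slope_sym in Hright. lra.
Qed.

Lemma convex_on_add_affine S g h a b : (forall x, h x = g x + (a * x + b)) ->
  convex_on S g -> convex_on S h.
Proof.
  intros Hh Hg x y t Sx Sy Ht. rewrite !Hh.
  assert (a * (t * x + (1 - t) * y) + b = t * (a * x + b) + (1 - t) * (a * y + b)) by ring.
  pose proof (Hg x y t Sx Sy Ht). lra.
Qed.

Lemma exp_convex u v t : 0 <= t <= 1 ->
  exp (t * u + (1 - t) * v) <= t * exp u + (1 - t) * exp v.
Proof.
  intros Ht. set (m := t * u + (1 - t) * v).
  assert (Htangent : forall w, exp m * (1 + (w - m)) <= exp w).
  { intros w. replace w with (m + (w - m)) at 2 by ring. rewrite exp_plus.
    pose proof (exp_ineq1_le (w - m)). pose proof (exp_pos m). nra. }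
  pose proof (Htangent u). pose proof (Htangent v).
  assert (t * (exp m * (1 + (u - m))) + (1 - t) * (exp m * (1 + (v - m))) = exp m)
    by (unfold m; ring).
  nra.
Qed.

Lemma convex_on_exp_comp S g : convex_on S g -> convex_on S (fun x => exp (g x)).
Proof.
  intros Hg x y t Sx Sy Ht.
  apply (Rle_trans _ (exp (t * g x + (1 - t) * g y))); [| exact (exp_convex _ _ t Ht)].
  destruct (Hg x y t Sx Sy Ht) as [Hlt | ->].
  - left; exact (exp_increasing _ _ Hlt).
  - right; reflexivity.
Qed.

Theorem corollaryG3 (S : R -> Prop) (Q q : R -> R) :
  is_interval S ->
  (* q = Q' on S *)
  (forall x, S x -> derive_within S Q x (q x)) ->
  (* Q twice differentiable on S: q = Q' is differentiable on S *)
  (forall x, S x -> exists d, derive_within S q x d) ->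
  (* the matching loss is convex in shat over S, for every s in S *)
  (forall s, S s -> convex_on S (fun shat => matching_loss Q q shat s)) ->
  (* then f' is non-decreasing on S, f = exp o Q *)
  forall df : R -> R,
    (forall x, S x -> derive_within S (f_of Q) x (df x)) ->
    nondecreasing_on S df.
Proof.
  intros HI _ _ Hloss df Hdf.
  set (H := fun z => ln (1 + exp (Q z))).
  assert (HH : convex_on S H).
  { intros a b t Sa Sb Ht.
    apply (convex_on_add_affine S (fun shat => matching_loss Q q shat a) H
             (q a * p_of Q a) (H a - a * q a * p_of Q a)); auto.
    intros z. unfold matching_loss, H. ring. }
  assert (Hf : convex_on S (f_of Q)).
  { apply (convex_on_add_affine S (fun z => exp (H z)) _ 0 (-1));
      [| exact (convex_on_exp_comp S H HH)].
    intros z. unfold f_of, H. rewrite exp_ln by (pose proof (exp_pos (Q z)); lra). ring. }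
  exact (convex_on_derive_within_nondecreasing S (f_of Q) df HI Hf Hdf).
Qed.
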